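(* Let $P$ be a weakly ranked poset and $f,g\in\mathscr{I}_{1/2}(P)$. Then there exists a single $P$-kernel $\kappa$ whose right KLS-function is $f$ and whose left KLS-function is $g$ if and only if $\overline{\bar g f}=\bar g f$.
   Context: A weakly ranked poset is a locally finite poset $P$ (all intervals finite) with a weak rank function: integers $r_{xy}$ for $x\le y$ with $r_{xy}>0$ for $x<y$ and $r_{xy}+r_{yz}=r_{xz}$. $I(P)=\prod_{x\le y}\mathbb{Z}[t]$ with components $f_{xy}(t)$ is a ring under convolution $(fg)_{xz}=\sum_{x\le y\le z}f_{xy}g_{yz}$ with identity $\delta$ ($\delta_{xx}=1$, $\delta_{xy}=0$ for $x<y$). $\mathscr{I}(P)$ is the subring of $f$ with $\deg f_{xy}\le r_{xy}$; it has the involution $\bar f_{xy}(t)=t^{r_{xy}}f_{xy}(t^{-1})$. $\mathscr{I}_{1/2}(P)$ is the set of $f\in\mathscr{I}(P)$ with $f_{xx}=1$ for all $x$ and $\deg f_{xy}<r_{xy}/2$ for $x<y$. A $P$-kernel is $\kappa\in\mathscr{I}(P)$ with $\kappa_{xx}=1$ for all $x$ and $\kappa^{-1}=\bar\kappa$. For a $P$-kernel $\kappa$ there are unique $f,g\in\mathscr{I}_{1/2}(P)$ with $\bar f=\kappa f$ and $\bar g=g\kappa$; $f$ is the right and $g$ the left KLS-function of $\kappa$. *)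

From HB Require Import structures.
From mathcomp Require Import all_boot all_order all_algebra.
Set Implicit Arguments. Unset Strict Implicit. Unset Printing Implicit Defensive.
Import Order.TTheory GRing.Theory Num.Theory.
Local Open Scope ring_scope.

(* A weakly ranked poset: a partial order [wle] on an eqType T, locally finite
   (each interval [x,y] is enumerated by the duplicate-free list [witv x y]),
   with a weak rank function [wr]. *)
Record wrposet (T : eqType) := WRPoset {
  wle : rel T;
  wle_refl : forall x, wle x x;
  wle_anti : forall x y, wle x y -> wle y x -> x = y;
  wle_trans : forall x y z, wle x y -> wle y z -> wle x z;
  witv : T -> T -> seq T;
  witv_uniq : forall x y, uniq (witv x y);
  mem_witv : forall x y z, (z \in witv x y) = wle x z && wle z y;
  wr : T -> T -> int;
  wr_pos : forall x y, wle x y -> x != y -> 0 < wr x y;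
  wr_add : forall x y z, wle x y -> wle y z -> wr x y + wr y z = wr x z
}.

Section Incidence.
Variables (T : eqType) (P : wrposet T).

(* Elements of I(P): only the components f x y with x <= y matter. *)
Definition incid := T -> T -> {poly int}.

Definition eqI (f g : incid) : Prop :=
  forall x y, wle P x y -> f x y = g x y.

Definition conv (f g : incid) : incid :=
  fun x z => \sum_(y <- witv P x z) f x y * g y z.

Definition delta : incid := fun x y => if x == y then 1 else 0.

Definition inI (f : incid) : Prop :=
  forall x y, wle P x y -> ((size (f x y))%:Z <= wr P x y + 1).

(* t^n p(t^{-1}) for deg p <= n *)
Definition revpoly (n : nat) (p : {poly int}) : {poly int} :=
  \poly_(i < n.+1) p`_(n - i).

Definition bar (f : incid) : incid :=
  fun x y => revpoly `|wr P x y|%N (f x y).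

Definition inIhalf (f : incid) : Prop :=
  [/\ inI f, (forall x, f x x = 1) &
      forall x y, wle P x y -> x != y ->
        ((size (f x y))%:Z - 1) * 2 < wr P x y].

Definition is_kernel (k : incid) : Prop :=
  [/\ inI k, (forall x, k x x = 1),
      eqI (conv k (bar k)) delta & eqI (conv (bar k) k) delta].

Definition right_KLS (k f : incid) : Prop :=
  inIhalf f /\ eqI (bar f) (conv k f).

Definition left_KLS (k g : incid) : Prop :=
  inIhalf g /\ eqI (bar g) (conv g k).

End Incidence.

From HB Require Import structures.
From mathcomp Require Import all_boot all_order all_algebra zify.
From Stdlib Require Import Setoid Morphisms.
Set Implicit Arguments. Unset Strict Implicit. Unset Printing Implicit Defensive.
Import Order.TTheory GRing.Theory Num.Theory.
Local Open Scope ring_scope.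

(* If [kappa] has right KLS-function [f] and left KLS-function [g], then
   [bar (bar g * f) = g * bar f = g * kappa * f = bar g * f].  Conversely, a
   unitriangular [f] is invertible in I(P) and [kappa := bar f * f^-1] is a
   P-kernel (because [bar] is a ring involution) with [kappa * f = bar f];
   self-duality of [bar g * f] says [g * bar f = bar g * f], i.e.
   [g * kappa = bar g]. *)

Lemma coef_revpoly n p i :
  (revpoly n p)`_i = if (i <= n)%N then p`_(n - i) else 0.
Proof. by rewrite /revpoly coef_poly ltnS. Qed.

Fact revpoly_is_linear n : linear (revpoly n).
Proof.
move=> c p q; apply/polyP=> i.
by rewrite coefD coefZ !coef_revpoly coefD coefZ; case: ifP; rewrite ?mulr0 ?addr0.
Qed.

HB.instance Definition _ n :=
  GRing.isLinear.Build int {poly int} {poly int} *:%R (revpoly n)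
    (revpoly_is_linear n).

Lemma revpolyZ n c p : revpoly n (c *: p) = c *: revpoly n p.
Proof. exact: linearZ. Qed.

Lemma revpoly_sum n I (r : seq I) (P : pred I) (F : I -> {poly int}) :
  revpoly n (\sum_(i <- r | P i) F i) = \sum_(i <- r | P i) revpoly n (F i).
Proof. exact: linear_sum. Qed.

Lemma revpolyXn n i : (i <= n)%N -> revpoly n 'X^i = 'X^(n - i).
Proof.
move=> le_in; apply/polyP=> k; rewrite coef_revpoly !coefXn.
case: leqP => hk; last by case: eqP => // e; lia.
by have -> : ((n - k)%N == i) = (k == n - i)%N by apply/eqP/eqP; lia.
Qed.

Lemma revpoly1 : revpoly 0 1 = 1.
Proof. by rewrite -(expr0 'X) revpolyXn. Qed.

Lemma poly_sumXn n (p : {poly int}) :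
  (size p <= n)%N -> p = \sum_(i < n) p`_i *: 'X^i.
Proof. by move=> hp; rewrite -poly_def -[LHS](take_poly_id hp). Qed.

Lemma revpoly_sumXn n (p : {poly int}) : (size p <= n.+1)%N ->
  revpoly n p = \sum_(i < n.+1) p`_i *: 'X^(n - i).
Proof.
move=> hp; rewrite {1}(poly_sumXn hp) revpoly_sum.
by apply: eq_bigr => i _; rewrite revpolyZ revpolyXn // -ltnS.
Qed.

Lemma revpolyM m n (p q : {poly int}) :
  (size p <= m.+1)%N -> (size q <= n.+1)%N ->
  revpoly (m + n) (p * q) = revpoly m p * revpoly n q.
Proof.
move=> hp hq; rewrite (revpoly_sumXn hp) (revpoly_sumXn hq).
rewrite {1}(poly_sumXn hp) {1}(poly_sumXn hq) !mulr_suml revpoly_sum.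
apply: eq_bigr => i _; rewrite !mulr_sumr revpoly_sum; apply: eq_bigr => j _.
rewrite -!scalerAl -!scalerAr !scalerA revpolyZ -!exprD.
have := ltn_ord i; have := ltn_ord j; rewrite !ltnS => hj hi.
by rewrite revpolyXn ?leq_add //; congr (_ *: 'X^_); lia.
Qed.

Lemma revpolyK n (p : {poly int}) :
  (size p <= n.+1)%N -> revpoly n (revpoly n p) = p.
Proof.
move=> hp; apply/polyP=> i; rewrite !coef_revpoly.
case: leqP => hi; first by rewrite leq_subr subKn.
by rewrite nth_default // (leq_trans hp hi).
Qed.

Section IncidenceAlgebra.
Variables (T : eqType) (P : wrposet T).

Local Notation le := (wle P).
Local Notation itv := (witv P).
Local Notation rk x y := (`|wr P x y|%N).
Local Notation "a ** b" := (conv P a b) (at level 40, left associativity).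
Local Notation "a == b :> 'I'" := (eqI P a b) (at level 70, b at next level).

Lemma wr_xx x : wr P x x = 0.
Proof. by have := wr_add (wle_refl P x) (wle_refl P x); lia. Qed.

Lemma wr_ge0 x y : le x y -> 0 <= wr P x y.
Proof.
move=> le_xy; have [->|ne] := eqVneq x y; first by rewrite wr_xx.
exact: ltW (wr_pos le_xy ne).
Qed.

Lemma rk_add x y z : le x y -> le y z -> rk x z = (rk x y + rk y z)%N.
Proof.
move=> le_xy le_yz; have := wr_add le_xy le_yz.
by have := wr_ge0 le_xy; have := wr_ge0 le_yz; lia.
Qed.

Lemma inI_sizeP (a : incid T) :
  inI P a <-> forall x y, le x y -> (size (a x y) <= (rk x y).+1)%N.
Proof.
by split=> ha x y le_xy; have := ha x y le_xy; have := wr_ge0 le_xy; lia.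
Qed.

Lemma mem_witv_l x y : le x y -> x \in itv x y.
Proof. by move=> le_xy; rewrite mem_witv wle_refl. Qed.

Lemma mem_witv_r x y : le x y -> y \in itv x y.
Proof. by move=> le_xy; rewrite mem_witv wle_refl le_xy. Qed.

Lemma witv_refl x : perm_eq (itv x x) [:: x].
Proof.
apply: uniq_perm => // [|z]; first exact: witv_uniq.
rewrite mem_witv inE; apply/andP/eqP => [[h1 h2]|->]; last by rewrite wle_refl.
exact: wle_anti h2 h1.
Qed.

Lemma size_witv_gt0 x y : le x y -> (0 < size (itv x y))%N.
Proof. by move/mem_witv_l; case: (itv x y). Qed.

Lemma size_witv_lt x y z :
  le x y -> le y z -> y != z -> (size (itv x y) < size (itv x z))%N.
Proof.
move=> le_xy le_yz ne_yz.
have z_notin : z \notin itv x y.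
  by rewrite mem_witv; apply/negP => /andP[_ /(wle_anti le_yz)/eqP]; apply/negP.
apply: (@uniq_leq_size _ (z :: itv x y)); first by rewrite /= z_notin witv_uniq.
move=> u; rewrite inE => /predU1P[->|]; first by rewrite mem_witv_r ?(wle_trans le_xy).
by rewrite !mem_witv => /andP[-> /wle_trans->].
Qed.

Lemma witv_filter_l x y z :
  le x y -> perm_eq (itv y z) [seq u <- itv x z | le y u].
Proof.
move=> le_xy; apply: uniq_perm; rewrite ?filter_uniq ?witv_uniq // => u.
rewrite mem_filter !mem_witv; case le_yu: (le y u) => //=.
by rewrite (wle_trans le_xy le_yu).
Qed.

Lemma witv_filter_r x y z :
  le y z -> perm_eq (itv x y) [seq u <- itv x z | le u y].
Proof.
move=> le_yz; apply: uniq_perm; rewrite ?filter_uniq ?witv_uniq // => u.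
rewrite mem_filter !mem_witv; case le_uy: (le u y); rewrite ?andbF //=.
by rewrite (wle_trans le_uy le_yz) andbT.
Qed.

Lemma conv_diag (a b : incid T) x : (a ** b) x x = a x x * b x x.
Proof. by rewrite /conv (perm_big _ (witv_refl x)) big_seq1. Qed.

Lemma conv_delta_l a : @delta T ** a == a :> I.
Proof.
move=> x y le_xy; rewrite /conv (bigD1_seq x) ?mem_witv_l ?witv_uniq //=.
rewrite /delta eqxx mul1r big1 ?addr0 // => u ne_ux.
by rewrite eq_sym (negbTE ne_ux) mul0r.
Qed.

Lemma conv_delta_r a : a ** @delta T == a :> I.
Proof.
move=> x y le_xy; rewrite /conv (bigD1_seq y) ?mem_witv_r ?witv_uniq //=.
by rewrite /delta eqxx mulr1 big1 ?addr0 // => u /negbTE->; rewrite mulr0.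
Qed.

Lemma conv_assoc a b c : a ** (b ** c) == a ** b ** c :> I.
Proof.
move=> x w _; rewrite /conv.
transitivity (\sum_(y <- itv x w) \sum_(z <- itv x w)
   (if le y z then a x y * (b y z * c z w) else 0)).
  apply: eq_big_seq => y; rewrite mem_witv => /andP[le_xy _].
  by rewrite mulr_sumr -big_mkcond (perm_big _ (witv_filter_l w le_xy)) big_filter.
rewrite exchange_big; apply: eq_big_seq => z; rewrite mem_witv => /andP[_ le_zw].
rewrite mulr_suml (perm_big _ (witv_filter_r x le_zw)) big_filter [RHS]big_mkcond.
by apply: eq_bigr => y _; case: ifP; rewrite ?mulrA.
Qed.

#[local] Instance eqI_equiv : Equivalence (eqI P).
Proof. by split=> [a|a b ab|a b c ab bc] x y le_xy; rewrite ?ab ?bc. Qed.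

#[local] Hint Extern 0 (eqI _ _ _) => reflexivity : core.

#[local] Instance conv_proper : Proper (eqI P ==> eqI P ==> eqI P) (conv P).
Proof.
move=> a a' aa' b b' bb' x z _; apply: eq_big_seq => y.
by rewrite mem_witv => /andP[le_xy le_yz]; rewrite aa' // bb'.
Qed.

#[local] Instance bar_proper : Proper (eqI P ==> eqI P) (bar P).
Proof. by move=> a a' aa' x y le_xy; rewrite /bar aa'. Qed.

Lemma bar_inI a : inI P (bar P a).
Proof. by apply/inI_sizeP => x y _; apply: size_poly. Qed.
#[local] Hint Resolve bar_inI : core.

Lemma conv_inI a b : inI P a -> inI P b -> inI P (a ** b).
Proof.
move=> /inI_sizeP ha /inI_sizeP hb; apply/inI_sizeP => x z _.
rewrite /conv big_seq; apply: (big_ind (fun p : {poly int} => size p <= (rk x z).+1)%N).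
- by rewrite size_poly0.
- by move=> p q hp hq; rewrite (leq_trans (size_polyD _ _)) // geq_max hp hq.
move=> y; rewrite mem_witv => /andP[le_xy le_yz].
rewrite (leq_trans (size_polyMleq _ _)) // (rk_add le_xy le_yz).
by have := ha _ _ le_xy; have := hb _ _ le_yz; lia.
Qed.

Lemma barK a : inI P a -> bar P (bar P a) == a :> I.
Proof. by move=> /inI_sizeP ha x y le_xy; rewrite /bar revpolyK ?ha. Qed.

Lemma bar_conv a b : inI P a -> inI P b -> bar P (a ** b) == bar P a ** bar P b :> I.
Proof.
move=> /inI_sizeP ha /inI_sizeP hb x z _; rewrite /bar revpoly_sum.
apply: eq_big_seq => y; rewrite mem_witv => /andP[le_xy le_yz].
by rewrite (rk_add le_xy le_yz) revpolyM ?ha ?hb.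
Qed.

Lemma bar_diag a x : a x x = 1 -> bar P a x x = 1.
Proof. by rewrite /bar wr_xx => ->; apply: revpoly1. Qed.

Lemma bar_delta : bar P (@delta T) == @delta T :> I.
Proof.
move=> x y _; rewrite /bar /delta; case: eqP => [<-|_]; last exact: linear0.
by rewrite wr_xx revpoly1.
Qed.

(* The left inverse [a^-1 x z = - sum_(x <= y < z) a^-1 x y * a y z], with
   the size of the interval as fuel: [invn a n] is correct on intervals with
   at most [n] elements. *)
Fixpoint invn (a : incid T) (n : nat) (x z : T) : {poly int} :=
  if n is n'.+1 then
    if x == z then 1 else - \sum_(y <- itv x z | y != z) invn a n' x y * a y z
  else 0.

Definition incid_inv a : incid T := fun x z => invn a (size (itv x z)) x z.

Lemma invn_stable a n m x z : le x z ->
  (size (itv x z) <= n)%N -> (size (itv x z) <= m)%N -> invn a n x z = invn a m x z.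
Proof.
elim: n m x z => [|n IHn] [|m] x z le_xz hn hm; have := size_witv_gt0 le_xz.
- by [].
- by rewrite ltnNge hn.
- by rewrite ltnNge hm.
move=> _; cbn [invn]; case: eqP => // _; apply: congr1.
rewrite big_seq_cond [RHS]big_seq_cond; apply: eq_bigr => y.
rewrite mem_witv => /andP[/andP[le_xy le_yz] ne_yz].
have lt_itv := size_witv_lt le_xy le_yz ne_yz.
by rewrite (IHn m) // -ltnS (leq_trans lt_itv).
Qed.

Lemma incid_inv_diag a x : incid_inv a x x = 1.
Proof. by rewrite /incid_inv (perm_size (witv_refl x)) /= eqxx. Qed.

Lemma incid_invE a x z : le x z -> x != z ->
  incid_inv a x z = - \sum_(y <- itv x z | y != z) incid_inv a x y * a y z.
Proof.
move=> le_xz ne_xz; rewrite /incid_inv; have := size_witv_gt0 le_xz.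
case e: (size (itv x z)) => [|n] // _; cbn [invn].
rewrite (negbTE ne_xz); apply: congr1.
rewrite big_seq_cond [RHS]big_seq_cond; apply: eq_bigr => y.
rewrite mem_witv => /andP[/andP[le_xy le_yz] ne_yz].
have := size_witv_lt le_xy le_yz ne_yz; rewrite e ltnS => lt_itv.
by rewrite (invn_stable _ le_xy lt_itv (leqnn _)).
Qed.

Lemma conv_incid_inv_l a : (forall x, a x x = 1) -> incid_inv a ** a == @delta T :> I.
Proof.
move=> a_diag x z le_xz; have [<-|ne_xz] := eqVneq x z.
  by rewrite conv_diag incid_inv_diag a_diag /delta eqxx mulr1.
rewrite /conv (bigD1_seq z) ?mem_witv_r ?witv_uniq //= a_diag mulr1.
by rewrite incid_invE // addNr /delta (negbTE ne_xz).
Qed.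

Lemma incid_inv_inI a : inI P a -> inI P (incid_inv a).
Proof.
move=> /inI_sizeP ha; apply/inI_sizeP => x z.
have [n] := ubnP (size (itv x z)); elim: n x z => // n IHn x z.
rewrite ltnS => hn le_xz; have [<-|ne_xz] := eqVneq x z.
  by rewrite incid_inv_diag size_poly1.
rewrite incid_invE // size_polyN big_seq_cond.
apply: (big_ind (fun p : {poly int} => size p <= (rk x z).+1)%N).
- by rewrite size_poly0.
- by move=> p q hp hq; rewrite (leq_trans (size_polyD _ _)) // geq_max hp hq.
move=> y /andP[]; rewrite mem_witv => /andP[le_xy le_yz] ne_yz.
have lt_itv := size_witv_lt le_xy le_yz ne_yz.
rewrite (leq_trans (size_polyMleq _ _)) // (rk_add le_xy le_yz).
have := IHn x y (leq_trans lt_itv hn) le_xy; have := ha _ _ le_yz; lia.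
Qed.

Lemma conv_incid_inv_r a : (forall x, a x x = 1) -> a ** incid_inv a == @delta T :> I.
Proof.
move=> a_diag; have inv_diag := incid_inv_diag a.
have inv_invE : incid_inv (incid_inv a) == a :> I.
  transitivity (incid_inv (incid_inv a) ** (incid_inv a ** a)).
    by rewrite conv_incid_inv_l // conv_delta_r.
  by rewrite conv_assoc conv_incid_inv_l // conv_delta_l.
by rewrite -[X in X ** _]inv_invE conv_incid_inv_l.
Qed.

Lemma bar_conv_selfdual k f g : inI P f -> inI P g ->
  bar P f == k ** f :> I -> bar P g == g ** k :> I ->
  bar P (bar P g ** f) == bar P g ** f :> I.
Proof.
by move=> fI gI rKf lKg; rewrite bar_conv // barK // rKf conv_assoc -lKg.
Qed.

Section KernelOfUnitriangular.
Variable f : incid T.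
Hypotheses (fI : inI P f) (f_diag : forall x, f x x = 1).

Definition kernel_of : incid T := bar P f ** incid_inv f.

Let f_invI : inI P (incid_inv f) := incid_inv_inI fI.

Lemma bar_kernel_of : bar P kernel_of == f ** bar P (incid_inv f) :> I.
Proof. by rewrite bar_conv // barK. Qed.

Lemma bar_incid_inv_l : bar P (incid_inv f) ** bar P f == @delta T :> I.
Proof. by rewrite -bar_conv // conv_incid_inv_l // bar_delta. Qed.

Lemma bar_incid_inv_r : bar P f ** bar P (incid_inv f) == @delta T :> I.
Proof. by rewrite -bar_conv // conv_incid_inv_r // bar_delta. Qed.

Lemma kernel_of_is_kernel : is_kernel P kernel_of.
Proof.
split.
- exact: conv_inI (bar_inI f) f_invI.
- by move=> x; rewrite /kernel_of conv_diag bar_diag // incid_inv_diag mulr1.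
- rewrite bar_kernel_of -conv_assoc (conv_assoc (incid_inv f)).
  by rewrite conv_incid_inv_l // conv_delta_l bar_incid_inv_r.
- rewrite bar_kernel_of -conv_assoc (conv_assoc (bar P (incid_inv f))).
  by rewrite bar_incid_inv_l conv_delta_l conv_incid_inv_r.
Qed.

Lemma kernel_of_right : bar P f == kernel_of ** f :> I.
Proof. by rewrite -conv_assoc conv_incid_inv_l // conv_delta_r. Qed.

Lemma kernel_of_left g : inI P g ->
  bar P (bar P g ** f) == bar P g ** f :> I -> bar P g == g ** kernel_of :> I.
Proof.
move=> gI; rewrite bar_conv // barK // => gf.
by rewrite conv_assoc gf -conv_assoc conv_incid_inv_r // conv_delta_r.
Qed.

End KernelOfUnitriangular.

End IncidenceAlgebra.

Theorem proposition2p7 (T : eqType) (P : wrposet T) (f g : incid T) :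
  inIhalf P f -> inIhalf P g ->
  ((exists k : incid T, is_kernel P k /\ right_KLS P k f /\ left_KLS P k g) <->
   eqI P (bar P (conv P (bar P g) f)) (conv P (bar P g) f)).
Proof.
move=> hf hg; have [fI f_diag _] := hf; have [gI _ _] := hg.
split=> [[k [_ [[_ rKf] [_ lKg]]]]|selfdual].
  exact: bar_conv_selfdual rKf lKg.
exists (kernel_of P f); split; last split.
- exact: kernel_of_is_kernel fI f_diag.
- by split; last exact: kernel_of_right f_diag.
- by split; last exact: kernel_of_left fI f_diag g gI selfdual.
Qed.
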